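(* Let $A\in\mathbb{C}^{n\times m}$, $\alpha_1\ge1/\sqrt{n}$, $\alpha_2\ge1/\sqrt{m}$, $B\in\mathbb{C}^{l\times n}$, $b\in\mathbb{R}^l$, $D\in\mathbb{C}^{q\times m}$, $d\in\mathbb{R}^q$, and let $$S_1=\{u\in\mathbb{C}^n:\|u\|\le\alpha_1,\ \operatorname{Re}(u)\ge0,\ \mathbf 1_n^Tu=1,\ \operatorname{Re}(Bu)\le b\},\quad S_2=\{v\in\mathbb{C}^m:\|v\|\le\alpha_2,\ \operatorname{Re}(v)\ge0,\ \mathbf 1_m^Tv=1,\ \operatorname{Re}(Dv)\ge d\}.$$ Assume there exist $u\in S_1$, $v\in S_2$ for which all defining inequality constraints of $S_1$ and $S_2$ hold strictly. Call $(u^\star,v^\star)\in S_1\times S_2$ a saddle-point equilibrium if $u^\star$ maximizes $\operatorname{Re}(u^HAv^\star)$ over $u\in S_1$ and $v^\star$ minimizes $\operatorname{Re}(u^{\star H}Av)$ over $v\in S_2$. Consider the problems $$\text{(P)}\quad \min_{v,\lambda_1,\beta_1,\rho_1,r_1}\ \lambda_1^Tb+\alpha_1\|\beta_1\|+\operatorname{Re}(\rho_1)\quad\text{s.t.}\quad Av-B^H\lambda_1-\beta_1+r_1-\bar\rho_1\mathbf 1_n=0,\ \operatorname{Re}(Dv)\ge d,\ \|v\|\le\alpha_2,\ \mathbf 1_m^Tv=1,\ \operatorname{Re}(v)\ge0,\ r_1\ge0,\ \lambda_1\ge0,$$ over $v\in\mathbb{C}^m$, $\lambda_1\in\mathbb{R}^l$,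 $\beta_1\in\mathbb{C}^n$, $\rho_1\in\mathbb{C}$, $r_1\in\mathbb{R}^n$, and $$\text{(D)}\quad \max_{u,\lambda_2,\beta_2,\rho_2,r_2}\ \lambda_2^Td-\alpha_2\|\beta_2\|-\operatorname{Re}(\rho_2)\quad\text{s.t.}\quad A^Hu-D^H\lambda_2+\beta_2-r_2+\bar\rho_2\mathbf 1_m=0,\ \operatorname{Re}(Bu)\le b,\ \|u\|\le\alpha_1,\ \mathbf 1_n^Tu=1,\ \operatorname{Re}(u)\ge0,\ r_2\ge0,\ \lambda_2\ge0,$$ over $u\in\mathbb{C}^n$, $\lambda_2\in\mathbb{R}^q$, $\beta_2\in\mathbb{C}^m$, $\rho_2\in\mathbb{C}$, $r_2\in\mathbb{R}^m$. Then $(u^\star,v^\star)$ is a saddle-point equilibrium if and only if there exist $(\rho_1^\star,r_1^\star,\lambda_1^\star,\beta_1^\star)$ and $(\rho_2^\star,r_2^\star,\lambda_2^\star,\beta_2^\star)$ such that $(v^\star,\lambda_1^\star,\beta_1^\star,\rho_1^\star,r_1^\star)$ is optimal for (P) and $(u^\star,\lambda_2^\star,\beta_2^\star,\rho_2^\star,r_2^\star)$ is optimal for (D).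
   Context: $\|\cdot\|$ is the Euclidean norm, $^H$ is conjugate transpose, $\bar\rho$ is complex conjugation, $\mathbf 1_k$ is the all-ones vector in $\mathbb{R}^k$, and inequalities between real vectors are componentwise. *)

From HB Require Import structures.
From mathcomp Require Import all_boot all_order all_algebra.
From mathcomp Require Import complex.
From mathcomp Require Import reals.
Set Implicit Arguments. Unset Strict Implicit. Unset Printing Implicit Defensive.
Import Order.TTheory GRing.Theory Num.Theory.
Local Open Scope ring_scope.

Section Defs.
Variable R : realType.
Local Notation C := (R[i]).

Definition cconj (z : C) : C := conjc z.

Definition cvC k (x : 'cV[R]_k) : 'cV[C]_k := map_mx (fun a : R => (a%:C)%C) x.

Definition adjmx k p (M : 'M[C]_(k, p)) : 'M[C]_(p, k) := map_mx cconj M^T.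

Definition cvnorm k (x : 'cV[C]_k) : R :=
  Num.sqrt (\sum_i ((@complex.Re R (x i 0)) ^+ 2 + (@complex.Im R (x i 0)) ^+ 2)).

Definition reV k (x : 'cV[C]_k) : 'cV[R]_k := map_mx (@complex.Re R) x.

Definition vle k (x y : 'cV[R]_k) : Prop := forall i, x i 0 <= y i 0.
Definition vlt k (x y : 'cV[R]_k) : Prop := forall i, x i 0 < y i 0.

Definition sumv k (x : 'cV[C]_k) : C := \sum_i x i 0.

Definition bil n m (u : 'cV[C]_n) (A : 'M[C]_(n, m)) (v : 'cV[C]_m) : R :=
  @complex.Re R ((adjmx u *m A *m v) 0 0).

Definition rdot k (x y : 'cV[R]_k) : R := \sum_i x i 0 * y i 0.

Definition S1 n l (alpha1 : R) (B : 'M[C]_(l, n)) (b : 'cV[R]_l)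
  (u : 'cV[C]_n) : Prop :=
  [/\ cvnorm u <= alpha1, vle 0 (reV u), sumv u = 1 & vle (reV (B *m u)) b].

Definition S2 m q (alpha2 : R) (D : 'M[C]_(q, m)) (d : 'cV[R]_q)
  (v : 'cV[C]_m) : Prop :=
  [/\ cvnorm v <= alpha2, vle 0 (reV v), sumv v = 1 & vle d (reV (D *m v))].

Definition S1strict n l (alpha1 : R) (B : 'M[C]_(l, n)) (b : 'cV[R]_l)
  (u : 'cV[C]_n) : Prop :=
  [/\ cvnorm u < alpha1, vlt 0 (reV u), sumv u = 1 & vlt (reV (B *m u)) b].

Definition S2strict m q (alpha2 : R) (D : 'M[C]_(q, m)) (d : 'cV[R]_q)
  (v : 'cV[C]_m) : Prop :=
  [/\ cvnorm v < alpha2, vlt 0 (reV v), sumv v = 1 & vlt d (reV (D *m v))].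

Definition saddle n m l q (A : 'M[C]_(n, m)) alpha1 alpha2
  (B : 'M[C]_(l, n)) (b : 'cV[R]_l) (D : 'M[C]_(q, m)) (d : 'cV[R]_q)
  (us : 'cV[C]_n) (vs : 'cV[C]_m) : Prop :=
  [/\ S1 alpha1 B b us, S2 alpha2 D d vs,
      (forall u, S1 alpha1 B b u -> bil u A vs <= bil us A vs) &
      (forall v, S2 alpha2 D d v -> bil us A vs <= bil us A v)].

Definition feasP n m l q (A : 'M[C]_(n, m)) (alpha2 : R)
  (B : 'M[C]_(l, n)) (D : 'M[C]_(q, m)) (d : 'cV[R]_q)
  (v : 'cV[C]_m) (lam1 : 'cV[R]_l) (beta1 : 'cV[C]_n) (rho1 : C)
  (r1 : 'cV[R]_n) : Prop :=
  [/\ A *m v - adjmx B *m cvC lam1 - beta1 + cvC r1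
        - cconj rho1 *: const_mx 1 = 0,
      vle d (reV (D *m v)), cvnorm v <= alpha2, sumv v = 1 &
      [/\ vle 0 (reV v), vle 0 r1 & vle 0 lam1]].

Definition objP n l (alpha1 : R) (b : 'cV[R]_l)
  (lam1 : 'cV[R]_l) (beta1 : 'cV[C]_n) (rho1 : C) : R :=
  rdot lam1 b + alpha1 * cvnorm beta1 + @complex.Re R rho1.

Definition optP n m l q (A : 'M[C]_(n, m)) (alpha1 alpha2 : R)
  (B : 'M[C]_(l, n)) (b : 'cV[R]_l) (D : 'M[C]_(q, m)) (d : 'cV[R]_q)
  v lam1 beta1 rho1 r1 : Prop :=
  feasP A alpha2 B D d v lam1 beta1 rho1 r1 /\
  forall v' lam1' beta1' rho1' r1',
    feasP A alpha2 B D d v' lam1' beta1' rho1' r1' ->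
    objP alpha1 b lam1 beta1 rho1 <= objP alpha1 b lam1' beta1' rho1'.

Definition feasD n m l q (A : 'M[C]_(n, m)) (alpha1 : R)
  (B : 'M[C]_(l, n)) (b : 'cV[R]_l) (D : 'M[C]_(q, m))
  (u : 'cV[C]_n) (lam2 : 'cV[R]_q) (beta2 : 'cV[C]_m) (rho2 : C)
  (r2 : 'cV[R]_m) : Prop :=
  [/\ adjmx A *m u - adjmx D *m cvC lam2 + beta2 - cvC r2
        + cconj rho2 *: const_mx 1 = 0,
      vle (reV (B *m u)) b, cvnorm u <= alpha1, sumv u = 1 &
      [/\ vle 0 (reV u), vle 0 r2 & vle 0 lam2]].

Definition objD m q (alpha2 : R) (d : 'cV[R]_q)
  (lam2 : 'cV[R]_q) (beta2 : 'cV[C]_m) (rho2 : C) : R :=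
  rdot lam2 d - alpha2 * cvnorm beta2 - @complex.Re R rho2.

Definition optD n m l q (A : 'M[C]_(n, m)) (alpha1 alpha2 : R)
  (B : 'M[C]_(l, n)) (b : 'cV[R]_l) (D : 'M[C]_(q, m)) (d : 'cV[R]_q)
  u lam2 beta2 rho2 r2 : Prop :=
  feasD A alpha1 B b D u lam2 beta2 rho2 r2 /\
  forall u' lam2' beta2' rho2' r2',
    feasD A alpha1 B b D u' lam2' beta2' rho2' r2' ->
    objD alpha2 d lam2' beta2' rho2' <= objD alpha2 d lam2 beta2 rho2.

End Defs.

From HB Require Import structures.
From mathcomp Require Import all_boot all_order all_algebra.
From mathcomp Require Import complex reals boolp classical_sets functions.
From mathcomp Require Import ring lra.
Set Implicit Arguments. Unset Strict Implicit. Unset Printing Implicit Defensive.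
Import Order.TTheory GRing.Theory Num.Theory.
Local Open Scope ring_scope.

(* For fixed v, problem (P) is the Lagrangian dual of maximising
   Re (u^H A v) over u in S1; by Slater's condition there is no duality gap and
   the dual is attained, so the optimal value of (P) is min_v max_u Re (u^H A v).
   Symmetrically (D), which is (P) for the game with payoff -A^H and the roles of
   the players exchanged, computes max_u min_v.  This gives the forward
   direction.  For the converse one needs the values of (P) and (D) to agree:
   the multiplier y of the equality constraint of an optimal solution of (P)
   lies in S1 and guarantees the value of (P) against every v in S2.  Both
   multiplier statements follow from a finite-dimensional Hahn-Banach sandwich
   theorem: a sublinear functional that is nonnegative on a convex set dominates
   a linear functional that is nonnegative on that set. *)

(** * A Hahn-Banach sandwich theorem on R^I *)

Local Open Scope classical_set_scope.
Lemma exists_between (R : realType) (L U : set R) :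
  L !=set0 -> U !=set0 -> (forall a b, L a -> U b -> a <= b) ->
  exists v, (forall a, L a -> a <= v) /\ (forall b, U b -> v <= b).
Proof.
move=> neL [b0 Ub0] LU; have supL : has_sup L by split=> //; exists b0 => a La; exact: LU.
exists (sup L); split=> [a La|b Ub]; first exact: sup_upper_bound.
by apply: ge_sup => // a La; exact: LU.
Qed.
Local Close Scope classical_set_scope.

Section ConeSeparation.
Variables (R : realType) (I : finType).
Implicit Types (c x y g : I -> R) (s : seq I).

Definition fdot c x := \sum_i c i * x i.

Lemma fdotD c x y : fdot c (x + y) = fdot c x + fdot c y.
Proof. by rewrite /fdot -big_split; apply: eq_bigr => i _; rewrite mulrDr. Qed.

Lemma fdotZ c t x : fdot c (t \*o x) = t * fdot c x.
Proof. by rewrite /fdot mulr_sumr; apply: eq_bigr => i _ /=; rewrite mulrCA. Qed.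

Lemma fdotC c x : fdot c x = fdot x c.
Proof. by apply: eq_bigr => i _; rewrite mulrC. Qed.

Lemma fdot_delta c a : fdot c (fun i => (i == a)%:R) = c a.
Proof. by rewrite /fdot (bigD1 a) //= eqxx mulr1 big1 ?addr0 // => i /negbTE->; rewrite mulr0. Qed.

Lemma fdotN c x : fdot c (- x) = - fdot c x.
Proof. by rewrite /fdot -sumrN; apply: eq_bigr => i _; rewrite fctE mulrN. Qed.

Variables (p : (I -> R) -> R) (G : (I -> R) -> Prop).
Hypothesis p_subadd : forall x y, p (x + y) <= p x + p y.
Hypothesis p_homo : forall t x, 0 < t -> p (t \*o x) = t * p x.
Hypothesis G0 : G 0.
Hypothesis G_add : forall x y, G x -> G y -> G (x + y).
Hypothesis G_scale : forall t x, 0 < t -> G x -> G (t \*o x).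
Hypothesis p_ge0_G : forall g, G g -> 0 <= p g.

Lemma pos_homo_eq0 : p 0 = 0.
Proof.
have := p_homo 0 (ltr0Sn _ 1); have -> : 2 \*o (0 : I -> R) = 0.
  by apply/funext => i /=; rewrite mulr0.
lra.
Qed.

Definition supported s x := forall i, i \notin s -> x i = 0.

Definition dominated_on c s :=
  forall x g, supported s x -> G g -> fdot c x <= p (x + g).

Lemma dominated_on_nil : dominated_on 0 [::].
Proof.
move=> x g sx Gg; rewrite /fdot big1 ?p_ge0_G // => [|i _]; last by rewrite mul0r.
by have -> : x + g = g by apply/funext => i; rewrite fctE sx ?add0r.
Qed.

Section Extension.
Variables (c : I -> R) (s : seq I) (a : I).
Hypothesis dom_c : dominated_on c s.
Let e : I -> R := fun i => (i == a)%:R.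
Local Open Scope classical_set_scope.

Lemma extension_value : exists v,
  (forall x g, supported s x -> G g -> fdot c x - p (x - e + g) <= v) /\
  (forall y g, supported s y -> G g -> v <= p (y + e + g) - fdot c y).
Proof.
pose L := [set fdot c x - p (x - e + g) | x in supported s & g in G].
pose U := [set p (y + e + g) - fdot c y | y in supported s & g in G].
have LU r r' : L r -> U r' -> r <= r'.
  move=> [x sx [g Gg <-]] [y sy [g' Gg' <-]].
  have sxy : supported s (x + y) by move=> i ni; rewrite fctE sx ?sy ?addr0.
  have := dom_c sxy (G_add Gg Gg'); rewrite fdotD.
  have := p_subadd (x - e + g) (y + e + g').
  rewrite addrACA [X in X + _]addrACA addNr addr0; lra.
have [||v [Lv Uv]] := @exists_between R L U _ _ LU.
- by exists (fdot c 0 - p (0 - e + 0)); exists 0 => //; exists 0.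
- by exists (p (0 + e + 0) - fdot c 0); exists 0 => //; exists 0.
by exists v; split=> x g sx Gg; [apply: Lv | apply: Uv]; exists x => //; exists g.
Qed.

Lemma dominated_on_cons : exists c', dominated_on c' (a :: s).
Proof.
have [v [v_lb v_ub]] := extension_value.
(* Split x = x' + t e with x' supported on s; for t <> 0 rescale by 1 / |t|
   and use the bound on v on the side given by the sign of t. *)
exists (fun i => if i == a then v else c i) => x g sx Gg.
pose t := x a; pose x' := x - t \*o e.
have sx' : supported s x'.
  move=> i ni; rewrite /x' /e !fctE /= /t; have [->|ia] := eqVneq i a.
    by rewrite mulr1 subrr.
  by rewrite mulr0 subr0 sx // in_cons negb_or ia.
have -> : fdot (fun i => if i == a then v else c i) x = fdot c x' + v * t.
  rewrite /fdot (bigD1 a) //= eqxx [in RHS](bigD1 a) //= /x' /e !fctE /= eqxx.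
  rewrite /t mulr1 subrr mulr0 add0r addrC; congr (_ + _).
  by apply: eq_bigr => i /negbTE ia; rewrite ia mulr0 subr0.
have xE i : x i = x' i + t * e i by rewrite /x' !fctE /= subrK.
clearbody x' t.
have supp_scaled u : supported s (u^-1 \*o x') by move=> i ni; rewrite /= sx' ?mulr0.
have G_scaled u : 0 < u -> G (u^-1 \*o g) by move=> u0; apply: G_scale; rewrite ?invr_gt0.
have [t_lt0|t_gt0|t0] := ltgtP t 0.
- have u_gt0 : 0 < - t by rewrite oppr_gt0.
  have := v_lb _ _ (supp_scaled (- t)) (G_scaled _ u_gt0).
  have -> : (- t)^-1 \*o x' - e + (- t)^-1 \*o g = (- t)^-1 \*o (x + g).
    by apply/funext => i; rewrite !fctE /= xE; field; rewrite lt_eqF.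
  rewrite p_homo ?invr_gt0 // fdotZ -mulrBr mulrC ler_pdivrMr //; lra.
- have := v_ub _ _ (supp_scaled t) (G_scaled _ t_gt0).
  have -> : t^-1 \*o x' + e + t^-1 \*o g = t^-1 \*o (x + g).
    by apply/funext => i; rewrite !fctE /= xE; field; rewrite gt_eqF.
  rewrite p_homo ?invr_gt0 // fdotZ -mulrBr mulrC ler_pdivlMr //; lra.
- have -> : x = x' by apply/funext => i; rewrite xE t0 mul0r addr0.
  by rewrite t0 mulr0 addr0; exact: dom_c.
Qed.
End Extension.

Lemma dominated_on_all s : exists c, dominated_on c s.
Proof.
elim: s => [|a s [c dom_c]]; first by exists 0; exact: dominated_on_nil.
exact: dominated_on_cons dom_c.
Qed.

Theorem sublinear_cone_separation :
  exists c, (forall x, fdot c x <= p x) /\ (forall g, G g -> 0 <= fdot c g).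
Proof.
have [c dom_c] := dominated_on_all (enum I).
have supp_all x : supported (enum I) x by move=> i; rewrite mem_enum.
exists c; split=> [x|g Gg].
  by have := dom_c x 0 (supp_all x) G0; rewrite addr0.
by have := dom_c (- g) g (supp_all _) Gg; rewrite addNr pos_homo_eq0 fdotN oppr_le0.
Qed.
End ConeSeparation.

Section ConvexSeparation.
Variables (R : realType) (I : finType).
Variables (p : (I -> R) -> R) (K : (I -> R) -> Prop).
Hypothesis p_subadd : forall x y, p (x + y) <= p x + p y.
Hypothesis p_homo : forall t x, 0 < t -> p (t \*o x) = t * p x.
Hypothesis K_neq0 : exists k, K k.
Hypothesis K_convex : forall t x y, 0 <= t <= 1 -> K x -> K y -> K (t \*o x + (1 - t) \*o y).
Hypothesis p_ge0_K : forall k, K k -> 0 <= p k.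

Let cone w := exists a k, [/\ 0 <= a, K k & w = a \*o k].

Let cone0 : cone 0.
Proof.
by have [k Kk] := K_neq0; exists 0, k; split=> //; apply/funext => i /=; rewrite mul0r.
Qed.

Let coneD x y : cone x -> cone y -> cone (x + y).
Proof.
move=> [a [k [a0 Kk ->]]] [a' [k' [a'0 Kk' ->]]].
have [s0|s_neq0] := eqVneq (a + a') 0.
  move: s0 => /eqP; rewrite paddr_eq0 // => /andP[/eqP-> /eqP->].
  by exists 0, k; split=> //; apply/funext => i; rewrite fctE /= !mul0r addr0.
have s_gt0 : 0 < a + a' by rewrite lt0r s_neq0 addr_ge0.
exists (a + a'), ((a / (a + a')) \*o k + (1 - a / (a + a')) \*o k'); split.
- exact: ltW.
- by apply: K_convex => //; rewrite divr_ge0 ?(ltW s_gt0) //= ler_pdivrMr // mul1r lerDl.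
- by apply/funext => i; rewrite !fctE /=; field.
Qed.

Let coneZ t x : 0 < t -> cone x -> cone (t \*o x).
Proof.
move=> t0 [a [k [a0 Kk ->]]]; exists (t * a), k; split=> //.
  by rewrite mulr_ge0 // ltW.
by apply/funext => i /=; rewrite mulrA.
Qed.

Let p_ge0_cone g : cone g -> 0 <= p g.
Proof.
move=> [a [k [a0 Kk ->]]]; have [->|a_gt0] := eqVneq a 0.
  suff -> : 0 \*o k = 0 by rewrite (pos_homo_eq0 p_homo).
  by apply/funext => i /=; rewrite mul0r.
by rewrite p_homo ?lt0r ?a_gt0 // mulr_ge0 ?p_ge0_K.
Qed.

Theorem sublinear_convex_separation :
  exists c, (forall x, fdot c x <= p x) /\ (forall k, K k -> 0 <= fdot c k).
Proof.
have [c [c_le_p c_ge0]] := sublinear_cone_separation p_subadd p_homo cone0 coneD coneZ p_ge0_cone.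
exists c; split=> // k Kk; apply: c_ge0; exists 1, k; split=> //.
by apply/funext => i /=; rewrite mul1r.
Qed.
End ConvexSeparation.

(** * The real inner product on C^k *)

Section ComplexInnerProduct.
Variable R : realType.
Local Notation C := R[i].
Local Notation Re := (@complex.Re R).
Local Notation Im := (@complex.Im R).
Variable k : nat.
Implicit Types (x y z : 'cV[C]_k) (a t : R).

Lemma Re_realM a (z : C) : Re (a%:C%C * z) = a * Re z.
Proof. by case: z => ? ? /=; ring. Qed.

Definition cdot x y : R :=
  \sum_i (Re (x i 0) * Re (y i 0) + Im (x i 0) * Im (y i 0)).

Lemma cdotC x y : cdot x y = cdot y x.
Proof. by apply: eq_bigr => i _; rewrite mulrC [Im _ * _]mulrC. Qed.

Lemma cdotDr x y z : cdot x (y + z) = cdot x y + cdot x z.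
Proof.
by rewrite /cdot -big_split; apply: eq_bigr => i _; rewrite !mxE !raddfD /=; ring.
Qed.

Lemma cdotNr x y : cdot x (- y) = - cdot x y.
Proof. by rewrite /cdot -sumrN; apply: eq_bigr => i _; rewrite !mxE !raddfN /=; ring. Qed.

Lemma cdotBr x y z : cdot x (y - z) = cdot x y - cdot x z.
Proof. by rewrite cdotDr cdotNr. Qed.

Lemma cdotZr a x y : cdot x (a%:C%C *: y) = a * cdot x y.
Proof.
rewrite /cdot mulr_sumr; apply: eq_bigr => i _.
by rewrite !mxE; case: (y i 0) => ? ? /=; ring.
Qed.

Lemma cdotDl x y z : cdot (y + z) x = cdot y x + cdot z x.
Proof. by rewrite !(cdotC _ x) cdotDr. Qed.

Lemma cdotBl x y z : cdot (y - z) x = cdot y x - cdot z x.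
Proof. by rewrite !(cdotC _ x) cdotBr. Qed.

Lemma cdotZl a x y : cdot (a%:C%C *: y) x = a * cdot y x.
Proof. by rewrite !(cdotC _ x) cdotZr. Qed.

Lemma cdot0r x : cdot x 0 = 0.
Proof. by rewrite /cdot big1 // => i _; rewrite mxE mulr0 mulr0 addr0. Qed.

Lemma cdot_ge0 x : 0 <= cdot x x.
Proof. by apply: sumr_ge0 => i _; rewrite -!expr2 addr_ge0 ?sqr_ge0. Qed.

Lemma cdotE x y : cdot x y = Re (\sum_i (x i 0)^* * y i 0).
Proof.
rewrite raddf_sum; apply: eq_bigr => i _.
by case: (x i 0) (y i 0) => [? ?] [? ?] /=; ring.
Qed.

Lemma cdot_self_eq0 x y : cdot x x = 0 -> cdot x y = 0.
Proof.
have sq_ge0 i : true -> 0 <= Re (x i 0) * Re (x i 0) + Im (x i 0) * Im (x i 0).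
  by rewrite -!expr2 addr_ge0 ?sqr_ge0.
move=> /(psumr_eq0P sq_ge0) x0; rewrite /cdot big1 // => i _.
move: (x0 i isT) => /eqP; rewrite -!expr2 paddr_eq0 ?sqr_ge0 // !sqrf_eq0.
by case/andP=> /eqP-> /eqP->; rewrite !mul0r addr0.
Qed.

Lemma cvnormE x : cvnorm x = Num.sqrt (cdot x x).
Proof. by congr Num.sqrt; apply: eq_bigr => i _; rewrite !expr2. Qed.

Lemma cvnorm_ge0 x : 0 <= cvnorm x.
Proof. exact: sqrtr_ge0. Qed.

Lemma cvnorm0 : cvnorm (0 : 'cV[C]_k) = 0.
Proof. by rewrite cvnormE cdot0r sqrtr0. Qed.

Lemma cvnorm_sqr x : cvnorm x ^+ 2 = cdot x x.
Proof. by rewrite cvnormE sqr_sqrtr ?cdot_ge0. Qed.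

Lemma cvnorm_le a x : 0 <= a -> (cvnorm x <= a) = (cdot x x <= a ^+ 2).
Proof. by move=> a0; rewrite -cvnorm_sqr ler_pXn2r ?nnegrE ?cvnorm_ge0. Qed.

Lemma cvnorm_lt a x : 0 <= a -> (cvnorm x < a) = (cdot x x < a ^+ 2).
Proof. by move=> a0; rewrite -cvnorm_sqr ltr_pXn2r ?nnegrE ?cvnorm_ge0. Qed.

Lemma cdot_cauchy_schwarz x y : cdot x y <= cvnorm x * cvnorm y.
Proof.
have [X0|Xpos] := eqVneq (cvnorm x) 0.
  by rewrite (cdot_self_eq0 _ (_ : _ = 0)) ?X0 ?mul0r // -cvnorm_sqr X0 expr0n.
have [Y0|Ypos] := eqVneq (cvnorm y) 0.
  by rewrite cdotC (cdot_self_eq0 _ (_ : _ = 0)) ?Y0 ?mulr0 // -cvnorm_sqr Y0 expr0n.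
have := cdot_ge0 ((cvnorm y)%:C%C *: x - (cvnorm x)%:C%C *: y).
rewrite !(cdotBl, cdotBr, cdotZl, cdotZr) (cdotC y x) -!cvnorm_sqr.
have : 0 < cvnorm x * cvnorm y by rewrite mulr_gt0 // lt0r ?Xpos ?Ypos cvnorm_ge0.
move: (cvnorm x) (cvnorm y) => X Y XY0 h.
by rewrite -subr_ge0 -(pmulr_rge0 _ XY0); nra.
Qed.

Lemma cvnormD x y : cvnorm (x + y) <= cvnorm x + cvnorm y.
Proof.
rewrite cvnorm_le ?addr_ge0 ?cvnorm_ge0 // cdotDl !cdotDr (cdotC y x) -!cvnorm_sqr.
by have := cdot_cauchy_schwarz x y; lra.
Qed.

Lemma cvnormZ a x : 0 <= a -> cvnorm (a%:C%C *: x) = a * cvnorm x.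
Proof.
move=> a0; rewrite !cvnormE cdotZl cdotZr mulrA -expr2.
by rewrite sqrtrM ?sqr_ge0 // sqrtr_sqr ger0_norm.
Qed.

Lemma cdot_self_convex t x y : 0 <= t <= 1 ->
  cdot (t%:C%C *: x + (1 - t)%:C%C *: y) (t%:C%C *: x + (1 - t)%:C%C *: y)
    <= t * cdot x x + (1 - t) * cdot y y.
Proof.
move=> /andP[t0 t1]; have := cdot_ge0 (x - y).
rewrite cdotBl !cdotBr !(cdotDl, cdotDr, cdotZl, cdotZr) (cdotC y x).
have : 0 <= t * (1 - t) by rewrite mulr_ge0 ?subr_ge0.
move: (cdot x x) (cdot x y) (cdot y y) => P Q S tt0 h; nra.
Qed.
End ComplexInnerProduct.

Section InnerProductMatrix.
Variable R : realType.
Local Notation C := R[i].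
Local Notation Re := (@complex.Re R).
Variable k : nat.
Implicit Types (x y : 'cV[C]_k).

Lemma cdot_adjmx p (M : 'M[C]_(p, k)) x (w : 'cV[C]_p) :
  cdot x (adjmx M *m w) = cdot (M *m x) w.
Proof.
rewrite !cdotE; congr Re.
under eq_bigr => i _ do rewrite mxE mulr_sumr.
rewrite exchange_big; apply: eq_bigr => j _.
rewrite mxE rmorph_sum mulr_suml; apply: eq_bigr => i _.
by rewrite /adjmx !mxE rmorphM /cconj /=; ring.
Qed.

Lemma bilE p (A : 'M[C]_(k, p)) x (v : 'cV[C]_p) : bil x A v = cdot x (A *m v).
Proof. by rewrite /bil -mulmxA mxE cdotE; congr Re; apply: eq_bigr => i _; rewrite !mxE. Qed.

Lemma cdot_cvC x (r : 'cV[R]_k) : cdot x (cvC r) = rdot r (reV x).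
Proof. by rewrite /cdot /rdot; apply: eq_bigr => i _; rewrite !mxE /=; ring. Qed.

Lemma cvC_comb t s (r r' : 'cV[R]_k) :
  cvC (t *: r + s *: r') = t%:C%C *: cvC r + s%:C%C *: cvC r'.
Proof. by apply/matrixP => i j; rewrite !mxE rmorphD !rmorphM. Qed.

Lemma sumvD x y : sumv (x + y) = sumv x + sumv y.
Proof. by rewrite /sumv -big_split; apply: eq_bigr => i _; rewrite mxE. Qed.

Lemma sumvN x : sumv (- x) = - sumv x.
Proof. by rewrite /sumv -sumrN; apply: eq_bigr => i _; rewrite mxE. Qed.

Lemma sumvZ (z : C) x : sumv (z *: x) = z * sumv x.
Proof. by rewrite /sumv mulr_sumr; apply: eq_bigr => i _; rewrite mxE. Qed.

Lemma sumv_const1 : sumv (const_mx 1 : 'cV[C]_k) = k%:R.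
Proof. by rewrite /sumv (eq_bigr (fun _ => 1)) ?sumr_const ?card_ord // => i _; rewrite mxE. Qed.

Lemma cdot_conj_const x (rho : C) :
  cdot x (cconj rho *: const_mx 1) = Re (rho * sumv x).
Proof.
rewrite cdotE /sumv mulr_sumr !raddf_sum; apply: eq_bigr => i _.
by rewrite !mxE mulr1 /cconj; case: rho (x i 0) => [? ?] [? ?] /=; ring.
Qed.
End InnerProductMatrix.

Lemma ray_bounded_slope_le0 (R : realFieldType) (s c K : R) :
  (forall t, 0 <= t -> t * s + c <= K) -> s <= 0.
Proof.
move=> bnd; rewrite leNgt; apply/negP => s_gt0.
have t0 : 0 <= (`|K - c| + 1) / s by rewrite divr_ge0 ?(ltW s_gt0) // addr_ge0.
by have := bnd _ t0; rewrite divfK ?gt_eqF //; have := ler_norm (K - c); lra.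
Qed.

Section RealVectors.
Variables (R : realType) (k : nat).
Implicit Types (x y z : 'cV[R]_k) (a s t : R) (j : 'I_k).

Lemma rdot_ge0 x y : vle 0 x -> vle 0 y -> 0 <= rdot x y.
Proof.
by move=> x0 y0; apply: sumr_ge0 => i _; move: (x0 i) (y0 i); rewrite !mxE; apply: mulr_ge0.
Qed.

Lemma ler_rdot x y z : vle 0 x -> vle y z -> rdot x y <= rdot x z.
Proof.
move=> x0 yz; apply: ler_sum => i _.
by apply: ler_wpM2l; [move: (x0 i); rewrite mxE | exact: yz].
Qed.

Lemma rdot0l x : rdot 0 x = 0.
Proof. by rewrite /rdot big1 // => i _; rewrite mxE mul0r. Qed.

Lemma rdotDl x y z : rdot (x + y) z = rdot x z + rdot y z.
Proof. by rewrite /rdot -big_split; apply: eq_bigr => i _; rewrite mxE mulrDl. Qed.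

Lemma rdotZl a x y : rdot (a *: x) y = a * rdot x y.
Proof. by rewrite /rdot mulr_sumr; apply: eq_bigr => i _; rewrite mxE mulrA. Qed.

Lemma rdotNr x y : rdot x (- y) = - rdot x y.
Proof. by rewrite /rdot -sumrN; apply: eq_bigr => i _; rewrite mxE mulrN. Qed.

Lemma rdot_delta t j x : rdot (t *: delta_mx j 0) x = t * x j 0.
Proof.
rewrite rdotZl /rdot (bigD1 j) //= big1 ?addr0 => [|i /negbTE ij]; rewrite mxE.
  by rewrite !eqxx mul1r.
by rewrite ij mul0r.
Qed.

Lemma vle0_delta t j : 0 <= t -> vle 0 (t *: delta_mx j 0).
Proof. by move=> t0 i; rewrite !mxE mulr_ge0. Qed.

Lemma vle0_comb t s x y : 0 <= t -> 0 <= s -> vle 0 x -> vle 0 y -> vle 0 (t *: x + s *: y).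
Proof.
by move=> t0 s0 x0 y0 i; move: (x0 i) (y0 i); rewrite !mxE => *; rewrite addr_ge0 ?mulr_ge0.
Qed.
End RealVectors.

(** * Lagrange duality for maximising a linear function over S1 *)

Section HyperplaneQuadratic.
Variables (R : realType) (k : nat).
Local Notation C := R[i].
Local Notation Re := (@complex.Re R).

Lemma hyperplane_quadratic_dual (c : 'cV[C]_k) (mu K a : R) :
  (0 < k)%N -> 0 <= mu ->
  (forall u, sumv u = 1 -> cdot u c - mu * cdot u u <= K) ->
  exists rho : C, a * cvnorm (c - cconj rho *: const_mx 1) + Re rho <= K + mu * a ^+ 2.
Proof.
(* rho is chosen so that 1^T beta = 2 mu: for mu > 0 the left-hand side of the
   hypothesis is then maximal at u = beta / (2 mu), while for mu = 0 it forces
   beta = 0. *)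
move=> k_gt0 mu0 bnd.
have k_neq0 : (k%:R : C) != 0 by rewrite pnatr_eq0 -lt0n.
pose rho := ((sumv c - (2 * mu)%:C%C) / k%:R)^*%C.
exists rho; set beta := c - _.
have sum_beta : sumv beta = (2 * mu)%:C%C.
  by rewrite /beta sumvD sumvN sumvZ sumv_const1 /cconj /rho conjcK divfK //; ring.
have {}bnd u : sumv u = 1 -> cdot u beta + Re rho - mu * cdot u u <= K.
  move=> u1; have := bnd u u1.
  by rewrite -[c](subrK (cconj rho *: const_mx 1)) -/beta cdotDr cdot_conj_const u1 mulr1.
have N0 := cvnorm_ge0 beta; have NE := cvnorm_sqr beta.
move: (cvnorm beta) N0 NE => N N0 NE.
have [mu_eq0|mu_neq0] := eqVneq mu 0.
  pose u1 := (k%:R)^-1 *: (const_mx 1 : 'cV[C]_k).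
  have sum_u1 : sumv u1 = 1 by rewrite sumvZ sumv_const1 mulVf.
  have ray t : 0 <= t -> t * cdot beta beta + (cdot u1 beta + Re rho) <= K.
    move=> t0; have := bnd (u1 + t%:C%C *: beta).
    rewrite sumvD sumvZ sum_u1 sum_beta mu_eq0 mulr0 rmorph0 mulr0 addr0 => /(_ erefl).
    by rewrite mul0r subr0 cdotDl cdotZl; lra.
  have N_eq0 : N = 0.
    by apply/eqP; rewrite -sqrf_eq0 NE eq_le cdot_ge0 andbT (ray_bounded_slope_le0 ray).
  have := bnd u1 sum_u1; rewrite cdotC (cdot_self_eq0 _ (_ : _ = 0)) -?NE ?N_eq0 ?expr0n //.
  by rewrite mu_eq0 !mul0r mulr0 subr0 add0r addr0.
have mu_gt0 : 0 < mu by rewrite lt0r mu_neq0.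
pose w := (2 * mu)^-1.
have := bnd (w%:C%C *: beta).
rewrite sumvZ sum_beta -rmorphM mulVf ?mulf_neq0 ?pnatr_eq0 // => /(_ erefl).
rewrite cdotZl cdotZr cdotZl -NE.
have -> : mu * (w * (w * N ^+ 2)) = w * N ^+ 2 / 2 by rewrite /w; field.
have : a * N <= mu * a ^+ 2 + w * N ^+ 2 / 2.
  rewrite -subr_ge0.
  have -> : mu * a ^+ 2 + w * N ^+ 2 / 2 - a * N = w / 2 * (2 * mu * a - N) ^+ 2.
    by rewrite /w; field.
  by rewrite mulr_ge0 ?sqr_ge0 // divr_ge0 // invr_ge0 mulr_ge0.
lra.
Qed.
End HyperplaneQuadratic.

Section S1Duality.
Variables (R : realType) (n l : nat) (alpha1 : R).
Variables (B : 'M[R[i]]_(l, n)) (b : 'cV[R]_l).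
Local Notation C := R[i].
Local Notation Re := (@complex.Re R).

Lemma S1_support_le (c : 'cV[C]_n) lam beta rho r u :
  c - adjmx B *m cvC lam - beta + cvC r - cconj rho *: const_mx 1 = 0 ->
  vle 0 r -> vle 0 lam -> S1 alpha1 B b u -> cdot u c <= objP alpha1 b lam beta rho.
Proof.
move=> /(congr1 (cdot u)) + r0 lam0 [nu u0 su Bu].
rewrite cdot0r !(cdotDr, cdotNr) cdot_adjmx !cdot_cvC cdot_conj_const su mulr1.
have := ler_rdot lam0 Bu; have := rdot_ge0 r0 u0.
have := le_trans (cdot_cauchy_schwarz u beta) (ler_wpM2r (cvnorm_ge0 beta) nu).
rewrite /objP; lra.
Qed.

Section Lagrange.
Variables (c : 'cV[C]_n) (val : R) (u0 : 'cV[C]_n).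
Hypothesis slater : S1strict alpha1 B b u0.
Hypothesis S1_bound : forall u, S1 alpha1 B b u -> cdot u c <= val.

Local Notation I := ('I_1 + ('I_l + 'I_n + 'I_1))%type.

Definition S1_gap (u : 'cV[C]_n) (i : I) : R :=
  match i with
  | inl _ => val - cdot u c
  | inr (inl (inl j)) => Re ((B *m u) j 0) - b j 0
  | inr (inl (inr j)) => - Re (u j 0)
  | inr (inr _) => cdot u u - alpha1 ^+ 2
  end.

Lemma S1_gap_convex t u u' i : 0 <= t <= 1 ->
  S1_gap (t%:C%C *: u + (1 - t)%:C%C *: u') i <= t * S1_gap u i + (1 - t) * S1_gap u' i.
Proof.
move=> t01; case: i => [_|[[j|j]|_]] /=.
- by rewrite cdotDl !cdotZl; lra.
- by rewrite mulmxDr -!scalemxAr !mxE raddfD /= !Re_realM; lra.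
- by rewrite !mxE raddfD /= !Re_realM; lra.
- by have := cdot_self_convex u u' t01; lra.
Qed.

Lemma S1_gap_slater i : i != inl ord0 -> S1_gap u0 i < 0.
Proof.
case: slater => nu0 pos0 _ Bu0; case: i => [o|[[j|j]|_]] /= => [|_|_|_].
- by rewrite (ord1 o) eqxx.
- by rewrite subr_lt0; move: (Bu0 j); rewrite mxE.
- by rewrite oppr_lt0; move: (pos0 j); rewrite !mxE.
- by rewrite subr_lt0 -cvnorm_lt // ltW // (le_lt_trans (cvnorm_ge0 u0) nu0).
Qed.

Lemma S1strict_alpha1_ge0 : 0 <= alpha1.
Proof. by case: slater => nu0 _ _ _; exact: ltW (le_lt_trans (cvnorm_ge0 u0) nu0). Qed.

Lemma S1_gap_sign u : sumv u = 1 -> exists i, 0 <= S1_gap u i.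
Proof.
move=> su; case: (boolP [exists i, 0 <= S1_gap u i]) => [/existsP//|/existsPn gap_lt0].
have lt0 i : S1_gap u i < 0 by rewrite ltNge gap_lt0.
have S1u : S1 alpha1 B b u.
  split=> // [|j|j].
  - by rewrite cvnorm_le ?S1strict_alpha1_ge0 // -subr_le0; exact: ltW (lt0 (inr (inr ord0))).
  - by rewrite !mxE -oppr_le0; exact: ltW (lt0 (inr (inl (inr j)))).
  - by rewrite mxE -subr_le0; exact: ltW (lt0 (inr (inl (inl j)))).
by have := S1_bound S1u; have := lt0 (inl ord0) => /=; lra.
Qed.

Definition maxc (w : I -> R) := \big[Order.max/w (inl ord0)]_i w i.

Lemma le_maxc w i : w i <= maxc w.
Proof. exact: le_bigmax. Qed.

Lemma maxc_le w a : (forall i, w i <= a) -> maxc w <= a.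
Proof. by move=> wa; apply: bigmax_le => // i _. Qed.

Lemma S1_gap_separation : exists cf : I -> R,
  (forall w, fdot cf w <= maxc w) /\ (forall u, sumv u = 1 -> 0 <= fdot cf (S1_gap u)).
Proof.
pose K w := exists2 u, sumv u = 1 & forall i, S1_gap u i <= w i.
have [|||||cf [cf_le cf_ge0]] := @sublinear_convex_separation R I maxc K.
- move=> x y; apply: maxc_le => i; rewrite fctE.
  by have := le_maxc x i; have := le_maxc y i; lra.
- move=> t x t0.
  by rewrite /maxc (big_morph (fun y => t * y) (fun y z => maxr_pMr y z (ltW t0)) erefl).
- by case: slater => _ _ su0 _; exists (S1_gap u0), u0.
- move=> t x y t01 [u su xu] [u' su' yu']; exists (t%:C%C *: u + (1 - t)%:C%C *: u').
    by rewrite sumvD !sumvZ su su' !mulr1 -rmorphD subrKC.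
  move=> i; apply: le_trans (S1_gap_convex _ _ _ t01) _; rewrite fctE /=.
  case/andP: t01 => t0 t1; apply: lerD; apply: ler_wpM2l; rewrite ?subr_ge0 //.
- by move=> w [u /S1_gap_sign[i gi] uw]; apply: le_trans gi (le_trans (uw i) (le_maxc w i)).
by exists cf; split=> // u su; apply: cf_ge0; exists u.
Qed.

Lemma S1_gap_multipliers : exists cf : I -> R,
  [/\ cf (inl ord0) = 1, forall i, 0 <= cf i & forall u, sumv u = 1 -> 0 <= fdot cf (S1_gap u)].
Proof.
have [cf [cf_le cf_gap]] := S1_gap_separation.
(* Positivity of the multiplier of the objective comes from the Slater point. *)
have cf_ge0 i : 0 <= cf i.
  have := cf_le (- (fun j => (j == i)%:R)); rewrite fdotN fdot_delta.
  have : maxc (- (fun j => (j == i)%:R)) <= 0 by apply: maxc_le => j; rewrite fctE oppr_le0.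
  lra.
have cf_sum : 1 <= \sum_i cf i.
  have := cf_le (fun _ => -1).
  rewrite /fdot (eq_bigr (fun i => - cf i)) ?sumrN => [|i _]; last by rewrite mulrN1.
  by have := maxc_le (fun _ : I => lexx (-1 : R)); lra.
have cf0_gt0 : 0 < cf (inl ord0).
  rewrite lt0r cf_ge0 andbT; apply/eqP => cf00.
  have term_ge0 i : true -> 0 <= - (cf i * S1_gap u0 i).
    move=> _; rewrite oppr_ge0; have [->|ne] := eqVneq i (inl ord0); first by rewrite cf00 mul0r.
    by rewrite mulr_ge0_le0 // ltW // S1_gap_slater.
  have : \sum_i - (cf i * S1_gap u0 i) = 0.
    apply/le_anti; rewrite sumr_ge0 // andbT sumrN oppr_le0.
    by case: slater => _ _ su0 _; exact: cf_gap.
  move/(psumr_eq0P term_ge0) => terms0; move: cf_sum; rewrite big1 ?ler10 // => i _.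
  move: (terms0 i isT) => /eqP; rewrite oppr_eq0 mulf_eq0 => /orP[/eqP //|/eqP gap0].
  have [ei|ne] := eqVneq i (inl ord0); first by rewrite ei.
  by move: (S1_gap_slater ne); rewrite gap0 ltxx.
exists ((cf (inl ord0))^-1 \*o cf); split=> [|i|u su] /=.
- by rewrite mulVf ?gt_eqF.
- by rewrite mulr_ge0 // invr_ge0 ltW.
- by rewrite fdotC fdotZ fdotC mulr_ge0 ?cf_gap // invr_ge0 ltW.
Qed.

Lemma S1_lagrange_multipliers : exists (lam : 'cV[R]_l) (r : 'cV[R]_n) (mu : R),
  [/\ vle 0 lam, vle 0 r, 0 <= mu &
      forall u, sumv u = 1 ->
        cdot u (c - adjmx B *m cvC lam + cvC r) - mu * cdot u u
          <= val - rdot lam b - mu * alpha1 ^+ 2].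
Proof.
have [cf [cf0 cf_ge0 cf_gap]] := S1_gap_multipliers.
pose lam := \col_j cf (inr (inl (inl j))) : 'cV[R]_l.
pose r := \col_j cf (inr (inl (inr j))) : 'cV[R]_n.
exists lam, r, (cf (inr (inr ord0))); split=> [j|j||u su]; rewrite ?mxE //.
have eB : \sum_j cf (inr (inl (inl j))) * (Re ((B *m u) j 0) - b j 0)
    = rdot lam (reV (B *m u)) - rdot lam b.
  by rewrite /rdot -sumrB; apply: eq_bigr => j _; rewrite !mxE mulrBr.
have eu : \sum_j cf (inr (inl (inr j))) * - Re (u j 0) = - rdot r (reV u).
  by rewrite /rdot -sumrN; apply: eq_bigr => j _; rewrite !mxE mulrN.
have := cf_gap u su; rewrite /fdot !big_sumType big_ord1 /= cf0 mul1r eB eu.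
by rewrite cdotDr cdotBr cdot_adjmx !cdot_cvC !big_ord1; lra.
Qed.

Lemma S1_support_attained : exists lam beta rho r,
  [/\ c - adjmx B *m cvC lam - beta + cvC r - cconj rho *: const_mx 1 = 0,
      vle 0 r, vle 0 lam & objP alpha1 b lam beta rho <= val].
Proof.
have [lam [r [mu [lam0 r0 mu0 bnd]]]] := S1_lagrange_multipliers.
have n_gt0 : (0 < n)%N.
  case: slater => _ _ su0 _; rewrite lt0n; apply/eqP => n0.
  have : sumv u0 = 0 by rewrite /sumv big1 // => -[i lt_in] _; exfalso; move: lt_in; rewrite n0.
  by rewrite su0 => /eqP; rewrite oner_eq0.
have [rho] := hyperplane_quadratic_dual alpha1 n_gt0 mu0 bnd.
set c' := c - _ + _ => bnd_rho.
exists lam, (c' - cconj rho *: const_mx 1), rho, r; split=> //.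
  by apply/matrixP => i j; rewrite /c' !mxE; ring.
by rewrite /objP; lra.
Qed.
End Lagrange.
End S1Duality.

(** * The problems (P) and (D) *)

(* A pair (t, z) in R x C^n is encoded as a real vector indexed by
   'I_1 + ('I_n + 'I_n): t, then the real parts, then the imaginary parts of z. *)
Section ScalarVectorPairs.
Variables (R : realType) (n : nat).
Local Notation C := R[i].
Local Notation I := ('I_1 + ('I_n + 'I_n))%type.

Definition tpart (w : I -> R) : R := w (inl ord0).

Definition zpart (w : I -> R) : 'cV[C]_n :=
  \col_j (w (inr (inl j)) +i* w (inr (inr j)))%C.

Definition tzpack (t : R) (z : 'cV[C]_n) : I -> R := fun i =>
  match i with
  | inl _ => t
  | inr (inl j) => complex.Re (z j 0)
  | inr (inr j) => complex.Im (z j 0)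
  end.

Lemma zpartD w w' : zpart (w + w') = zpart w + zpart w'.
Proof. by apply/matrixP => j k; rewrite !mxE. Qed.

Lemma zpartZ t w : zpart (t \*o w) = t%:C%C *: zpart w.
Proof. by apply/matrixP => j k; rewrite !mxE /=; simpc. Qed.

Lemma zpart_tzpack t z : zpart (tzpack t z) = z.
Proof. by apply/matrixP => j k; rewrite !mxE (ord1 k) /=; case: (z j 0). Qed.

Lemma fdot_tzpack c t z : fdot c (tzpack t z) = tpart c * t + cdot (zpart c) z.
Proof.
rewrite /fdot big_sumType big_ord1 /= big_sumType /cdot big_split /=; congr (_ + (_ + _)).
  by apply: eq_bigr => j _; rewrite !mxE.
by apply: eq_bigr => j _; rewrite !mxE.
Qed.
End ScalarVectorPairs.

Section ProblemP.
Variables (R : realType) (n m l q : nat) (A : 'M[R[i]]_(n, m)) (alpha1 alpha2 : R).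
Variables (B : 'M[R[i]]_(l, n)) (b : 'cV[R]_l) (D : 'M[R[i]]_(q, m)) (d : 'cV[R]_q).
Local Notation C := R[i].
Local Notation Re := (@complex.Re R).
Local Notation Im := (@complex.Im R).

Lemma feasP_S2 v lam beta rho r : feasP A alpha2 B D d v lam beta rho r -> S2 alpha2 D d v.
Proof. by case=> _ ? ? ? []. Qed.

Lemma weak_dualityP v lam beta rho r u :
  feasP A alpha2 B D d v lam beta rho r -> S1 alpha1 B b u ->
  bil u A v <= objP alpha1 b lam beta rho.
Proof. by case=> E _ _ _ [_ r0 lam0] S1u; rewrite bilE; exact: S1_support_le E r0 lam0 S1u. Qed.

Lemma strong_dualityP u0 v val :
  S1strict alpha1 B b u0 -> S2 alpha2 D d v ->
  (forall u, S1 alpha1 B b u -> bil u A v <= val) ->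
  exists lam beta rho r,
    feasP A alpha2 B D d v lam beta rho r /\ objP alpha1 b lam beta rho <= val.
Proof.
move=> slater [? ? ? ?] bnd.
have bnd' u : S1 alpha1 B b u -> cdot u (A *m v) <= val by rewrite -bilE; exact: bnd.
have [lam [beta [rho [r [E r0 lam0 obj]]]]] := S1_support_attained slater bnd'.
by exists lam, beta, rho, r.
Qed.

Lemma S2_convex t v v' : 0 <= t <= 1 -> S2 alpha2 D d v -> S2 alpha2 D d v' ->
  S2 alpha2 D d (t%:C%C *: v + (1 - t)%:C%C *: v').
Proof.
move=> t01 [nv pv sv dv] [nv' pv' sv' dv']; have /andP[t0 t1] := t01.
have a0 : 0 <= alpha2 := le_trans (cvnorm_ge0 v) nv.
split=> [|i|//|i].
- move: nv nv'; rewrite !cvnorm_le //; have := cdot_self_convex v v' t01; nra.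
- by move: (pv i) (pv' i); rewrite !mxE raddfD /= !Re_realM; nra.
- by rewrite sumvD !sumvZ sv sv' !mulr1 -rmorphD subrKC.
- move: (dv i) (dv' i); rewrite mulmxDr -!scalemxAr !mxE raddfD /= !Re_realM; nra.
Qed.

(* Given the other variables, the only feasible beta in (P) is this residual of
   the equality constraint. *)
Definition residual v (lam : 'cV[R]_l) (rho : C) (r : 'cV[R]_n) : 'cV[C]_n :=
  A *m v - adjmx B *m cvC lam + cvC r - cconj rho *: const_mx 1.

Lemma feasP_residual v lam rho r : S2 alpha2 D d v -> vle 0 lam -> vle 0 r ->
  feasP A alpha2 B D d v lam (residual v lam rho r) rho r.
Proof.
case=> nv pv sv dv lam0 r0; split=> //.
by rewrite /residual; apply/matrixP => i j; rewrite !mxE; ring.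
Qed.

Lemma residual_comb t s v v' lam lam' rho rho' r r' :
  residual (t%:C%C *: v + s%:C%C *: v') (t *: lam + s *: lam')
           (t%:C%C * rho + s%:C%C * rho') (t *: r + s *: r')
  = t%:C%C *: residual v lam rho r + s%:C%C *: residual v' lam' rho' r'.
Proof.
have conj_comb :
    cconj (t%:C%C * rho + s%:C%C * rho') = t%:C%C * cconj rho + s%:C%C * cconj rho'.
  by case: rho rho' => [? ?] [? ?]; apply/eqP; rewrite eq_complex /=; apply/andP; split;
    apply/eqP; ring.
rewrite /residual !cvC_comb conj_comb !mulmxDr -!scalemxAr.
by apply/matrixP => i j; rewrite !mxE; ring.
Qed.

Lemma cdot_residual y v lam rho r : cdot y (residual v lam rho r)
  = bil y A v - rdot lam (reV (B *m y)) + rdot r (reV y) - Re (rho * sumv y).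
Proof. by rewrite /residual cdotBr cdotDr cdotBr cdot_adjmx !cdot_cvC cdot_conj_const bilE. Qed.

Section OptPMultiplier.
Variables (vs : 'cV[C]_m) (lam1 : 'cV[R]_l) (beta1 : 'cV[C]_n) (rho1 : C) (r1 : 'cV[R]_n).
Hypothesis optP1 : optP A alpha1 alpha2 B b D d vs lam1 beta1 rho1 r1.
Hypothesis alpha1_ge0 : 0 <= alpha1.
Local Notation pv := (objP alpha1 b lam1 beta1 rho1).

Let p (w : 'I_1 + ('I_n + 'I_n) -> R) := tpart w + alpha1 * cvnorm (zpart w).

Let K w := exists v lam rho r, [/\ S2 alpha2 D d v, vle 0 lam, vle 0 r,
  zpart w = residual v lam rho r & rdot lam b + Re rho - pv <= tpart w].

(* K is the set of (cost - value of (P), residual) over the feasible points of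
   (P), enlarged upwards in the cost; optimality makes t + alpha1 |z| nonnegative
   on it, and the vector part of a separating functional is the multiplier. *)
Lemma optP_separation : exists y, cvnorm y <= alpha1 /\
  forall v lam rho r, S2 alpha2 D d v -> vle 0 lam -> vle 0 r ->
    pv <= rdot lam b + Re rho + cdot y (residual v lam rho r).
Proof.
have S2vs := feasP_S2 (proj1 optP1).
have [|||||cf [cf_le cf_K]] := @sublinear_convex_separation R _ p K.
- move=> x y; rewrite /p zpartD.
  by have := ler_wpM2l alpha1_ge0 (cvnormD (zpart x) (zpart y)); rewrite /tpart fctE; lra.
- by move=> t x t0; rewrite /p zpartZ cvnormZ ?ltW // /tpart /=; ring.
- exists (tzpack (- pv) (residual vs 0 0 0)), vs, 0, 0, 0.
  by split=> //; rewrite ?zpart_tzpack // rdot0l add0r sub0r.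
- move=> t x y t01 [v [lam [rho [r [S2v lam0 r0 zx tx]]]]].
  move=> [v' [lam' [rho' [r' [S2v' lam0' r0' zy ty]]]]]; have /andP[t0 t1] := t01.
  exists (t%:C%C *: v + (1 - t)%:C%C *: v'), (t *: lam + (1 - t) *: lam'),
    (t%:C%C * rho + (1 - t)%:C%C * rho'), (t *: r + (1 - t) *: r').
  have t'0 : 0 <= 1 - t by rewrite subr_ge0.
  split; [exact: S2_convex | exact: vle0_comb | exact: vle0_comb | |].
    by rewrite zpartD !zpartZ zx zy residual_comb.
  move: tx ty; rewrite rdotDl !rdotZl [Re (_ + _)]raddfD /= !Re_realM /tpart fctE /=; nra.
- move=> w [v [lam [rho [r [S2v lam0 r0 zw tw]]]]]; rewrite /p zw.
  by move: tw; have := proj2 optP1 _ _ _ _ _ (feasP_residual rho S2v lam0 r0); rewrite /objP; lra.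
have p_tzpack t z : p (tzpack t z) = t + alpha1 * cvnorm z by rewrite /p zpart_tzpack.
have cf_t1 : tpart cf = 1.
  have := cf_le (tzpack 1 0); have := cf_le (tzpack (-1) 0).
  by rewrite !fdot_tzpack !p_tzpack cdot0r cvnorm0; lra.
exists (zpart cf); split.
  have := cf_le (tzpack 0 (zpart cf)); rewrite fdot_tzpack p_tzpack mulr0 !add0r -cvnorm_sqr.
  have [->|N_neq0] := eqVneq (cvnorm (zpart cf)) 0; first by [].
  by rewrite expr2 ler_pM2r // lt0r N_neq0 cvnorm_ge0.
move=> v lam rho r S2v lam0 r0.
have Kw : K (tzpack (rdot lam b + Re rho - pv) (residual v lam rho r)).
  by exists v, lam, rho, r; rewrite zpart_tzpack.
by have := cf_K _ Kw; rewrite fdot_tzpack cf_t1 mul1r; lra.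
Qed.

Lemma optP_multiplier : exists2 y, S1 alpha1 B b y &
  forall v, S2 alpha2 D d v -> pv <= bil y A v.
Proof.
have [y [ny sep]] := optP_separation.
have S2vs := feasP_S2 (proj1 optP1).
have vle00 k : vle 0 (0 : 'cV[R]_k) by [].
have key v lam rho r : S2 alpha2 D d v -> vle 0 lam -> vle 0 r ->
    pv <= rdot lam b + Re rho + bil y A v - rdot lam (reV (B *m y)) + rdot r (reV y)
          - Re (rho * sumv y).
  by move=> S2v lam0 r0; have := sep v lam rho r S2v lam0 r0; rewrite cdot_residual; lra.
have bnd_vs : pv <= bil y A vs.
  by have := key vs 0 0 0 S2vs (vle00 _) (vle00 _); rewrite !rdot0l mul0r /=; lra.
exists y => [|v S2v]; last first.
  by have := key v 0 0 0 S2v (vle00 _) (vle00 _); rewrite !rdot0l mul0r /=; lra.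
split=> // [j||j].
- rewrite !mxE -oppr_le0; apply: (@ray_bounded_slope_le0 _ _ (pv - bil y A vs) 0) => t t0.
  have := key vs 0 0 (t *: delta_mx j 0) S2vs (vle00 _) (vle0_delta j t0).
  by rewrite !rdot0l rdot_delta mul0r mxE /=; lra.
- have sq_le0 : Re (sumv y - 1) ^+ 2 + Im (sumv y - 1) ^+ 2 <= 0.
    apply: (@ray_bounded_slope_le0 _ _ (pv - bil y A vs) 0) => t t0.
    have := key vs 0 (t%:C%C * (sumv y - 1)^*%C) 0 S2vs (vle00 _) (vle00 _).
    by rewrite !rdot0l; case: (sumv y) => a c /=; lra.
  apply/eqP; rewrite -subr_eq0; move: sq_le0; case: (sumv y - 1) => a c /= sq_le0.
  have /eqP : a ^+ 2 + c ^+ 2 = 0 by apply/le_anti; rewrite sq_le0 addr_ge0 ?sqr_ge0.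
  by rewrite paddr_eq0 ?sqr_ge0 // !sqrf_eq0 eq_complex /= => /andP[-> ->].
- rewrite mxE -subr_le0; apply: (@ray_bounded_slope_le0 _ _ (pv - bil y A vs) 0) => t t0.
  have := key vs (t *: delta_mx j 0) 0 0 S2vs (vle0_delta j t0) (vle00 _).
  by rewrite rdot0l !rdot_delta mul0r mxE /=; lra.
Qed.
End OptPMultiplier.
End ProblemP.

(* (D) is (P) for the game with payoff matrix -A^H in which the players exchange
   roles; this transfers the results on (P) to (D). *)
Section Mirror.
Variable R : realType.
Local Notation C := R[i].

Lemma reV_mulNmx k p (M : 'M[C]_(k, p)) x : reV ((- M) *m x) = - reV (M *m x).
Proof. by apply/matrixP => i j; rewrite mulNmx !mxE raddfN. Qed.

Lemma vleNN k (x y : 'cV[R]_k) : vle (- x) (- y) <-> vle y x.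
Proof. by split=> xy i; move: (xy i); rewrite !mxE lerN2. Qed.

Lemma vltNN k (x y : 'cV[R]_k) : vlt (- x) (- y) <-> vlt y x.
Proof. by split=> xy i; move: (xy i); rewrite !mxE ltrN2. Qed.

Lemma S1_mirror m q a (D : 'M[C]_(q, m)) d v : S1 a (- D) (- d) v <-> S2 a D d v.
Proof. by rewrite /S1 /S2 reV_mulNmx; split=> -[? ? ? /vleNN]. Qed.

Lemma S2_mirror n l a (B : 'M[C]_(l, n)) b u : S1 a B b u -> S2 a (- B) (- b) u.
Proof. by case=> ? ? ? ?; split; rewrite // reV_mulNmx; apply/vleNN. Qed.

Lemma S1strict_mirror m q a (D : 'M[C]_(q, m)) d v :
  S2strict a D d v -> S1strict a (- D) (- d) v.
Proof. by case=> ? ? ? ?; split; rewrite // reV_mulNmx; apply/vltNN. Qed.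

Lemma bil_mirror n m (A : 'M[C]_(n, m)) u v : bil v (- adjmx A) u = - bil u A v.
Proof. by rewrite !bilE mulNmx cdotNr cdot_adjmx cdotC. Qed.

Lemma objP_mirror m q a (d : 'cV[R]_q) lam (beta : 'cV[C]_m) rho :
  objP a (- d) lam beta rho = - objD a d lam beta rho.
Proof. by rewrite /objP /objD rdotNr; ring. Qed.

Lemma adjmxN k p (M : 'M[C]_(k, p)) : adjmx (- M) = - adjmx M.
Proof. by apply/matrixP => i j; rewrite !mxE /cconj rmorphN. Qed.

Lemma feasP_mirror n m l q (A : 'M[C]_(n, m)) a (B : 'M[C]_(l, n)) b (D : 'M[C]_(q, m))
    u lam beta rho r :
  feasP (- adjmx A) a (- D) (- B) (- b) u lam beta rho r <-> feasD A a B b D u lam beta rho r.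
Proof.
rewrite /feasP /feasD.
have -> : (- adjmx A) *m u - adjmx (- D) *m cvC lam - beta + cvC r - cconj rho *: const_mx 1
    = - (adjmx A *m u - adjmx D *m cvC lam + beta - cvC r + cconj rho *: const_mx 1).
  by rewrite adjmxN !mulNmx !opprD !opprK.
rewrite reV_mulNmx; split=> -[E Bu ? ? ?]; split=> //; move: Bu; rewrite ?vleNN //.
- by move/eqP: E; rewrite oppr_eq0 => /eqP.
- by rewrite E oppr0.
Qed.
End Mirror.

Section ProblemD.
Variables (R : realType) (n m l q : nat) (A : 'M[R[i]]_(n, m)) (alpha1 alpha2 : R).
Variables (B : 'M[R[i]]_(l, n)) (b : 'cV[R]_l) (D : 'M[R[i]]_(q, m)) (d : 'cV[R]_q).

Lemma feasD_S1 u lam beta rho r : feasD A alpha1 B b D u lam beta rho r -> S1 alpha1 B b u.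
Proof. by case=> _ ? ? ? []. Qed.

Lemma weak_dualityD u lam beta rho r v :
  feasD A alpha1 B b D u lam beta rho r -> S2 alpha2 D d v ->
  objD alpha2 d lam beta rho <= bil u A v.
Proof.
move=> fD S2v; have fP := (feasP_mirror A alpha1 B b D u lam beta rho r).2 fD.
have S1v := (S1_mirror alpha2 D d v).2 S2v.
by have := weak_dualityP fP S1v; rewrite bil_mirror objP_mirror lerN2.
Qed.

Lemma strong_dualityD v0 u val :
  S2strict alpha2 D d v0 -> S1 alpha1 B b u ->
  (forall v, S2 alpha2 D d v -> val <= bil u A v) ->
  exists lam beta rho r,
    feasD A alpha1 B b D u lam beta rho r /\ val <= objD alpha2 d lam beta rho.
Proof.
move=> /S1strict_mirror slater /S2_mirror S2u bnd.
have bnd' v : S1 alpha2 (- D) (- d) v -> bil v (- adjmx A) u <= - val.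
  by move/S1_mirror/bnd; rewrite bil_mirror lerN2.
have [lam [beta [rho [r [fP obj]]]]] := strong_dualityP slater S2u bnd'.
have fD := (feasP_mirror A alpha1 B b D u lam beta rho r).1 fP.
by exists lam, beta, rho, r; split; rewrite // -lerN2 -objP_mirror.
Qed.
End ProblemD.

(** * Saddle points *)

Section SaddlePoints.
Variables (R : realType) (n m l q : nat) (A : 'M[R[i]]_(n, m)) (alpha1 alpha2 : R).
Variables (B : 'M[R[i]]_(l, n)) (b : 'cV[R]_l) (D : 'M[R[i]]_(q, m)) (d : 'cV[R]_q).
Variables (u0 : 'cV[R[i]]_n) (v0 : 'cV[R[i]]_m).
Hypotheses (slater1 : S1strict alpha1 B b u0) (slater2 : S2strict alpha2 D d v0).

Lemma saddle_optP_optD us vs : saddle A alpha1 alpha2 B b D d us vs ->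
  exists rho1 r1 lam1 beta1 rho2 r2 lam2 beta2,
    optP A alpha1 alpha2 B b D d vs lam1 beta1 rho1 r1 /\
    optD A alpha1 alpha2 B b D d us lam2 beta2 rho2 r2.
Proof.
case=> S1us S2vs us_max vs_min.
have [lam1 [beta1 [rho1 [r1 [fP objP_le]]]]] := strong_dualityP slater1 S2vs us_max.
have [lam2 [beta2 [rho2 [r2 [fD objD_ge]]]]] := strong_dualityD slater2 S1us vs_min.
exists rho1, r1, lam1, beta1, rho2, r2, lam2, beta2; split; split=> //.
- move=> v lam beta rho r fP'; apply: le_trans objP_le _.
  exact: le_trans (vs_min _ (feasP_S2 fP')) (weak_dualityP fP' S1us).
- move=> u lam beta rho r fD'; apply: le_trans objD_ge.
  exact: le_trans (weak_dualityD fD' S2vs) (us_max _ (feasD_S1 fD')).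
Qed.

Lemma optP_optD_saddle us vs rho1 r1 lam1 beta1 rho2 r2 lam2 beta2 :
  optP A alpha1 alpha2 B b D d vs lam1 beta1 rho1 r1 ->
  optD A alpha1 alpha2 B b D d us lam2 beta2 rho2 r2 ->
  saddle A alpha1 alpha2 B b D d us vs.
Proof.
move=> oP oD; have S2vs := feasP_S2 oP.1; have S1us := feasD_S1 oD.1.
have [y S1y y_min] := optP_multiplier oP (S1strict_alpha1_ge0 slater1).
have [lam [beta [rho [r [fD objP_le]]]]] := strong_dualityD slater2 S1y y_min.
have no_gap := le_trans objP_le (oD.2 _ _ _ _ _ fD).
split=> // [u S1u|v S2v].
- exact: le_trans (weak_dualityP oP.1 S1u) (le_trans no_gap (weak_dualityD oD.1 S2vs)).
- exact: le_trans (weak_dualityP oP.1 S1us) (le_trans no_gap (weak_dualityD oD.1 S2v)).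
Qed.
End SaddlePoints.

Theorem theorem5 (R : realType) (n m l q : nat)
  (A : 'M[R[i]]_(n, m)) (alpha1 alpha2 : R)
  (B : 'M[R[i]]_(l, n)) (b : 'cV[R]_l) (D : 'M[R[i]]_(q, m)) (d : 'cV[R]_q) :
  (Num.sqrt (n%:R))^-1 <= alpha1 ->
  (Num.sqrt (m%:R))^-1 <= alpha2 ->
  (exists u, S1strict alpha1 B b u) ->
  (exists v, S2strict alpha2 D d v) ->
  forall (us : 'cV[R[i]]_n) (vs : 'cV[R[i]]_m),
    saddle A alpha1 alpha2 B b D d us vs <->
    exists (rho1 : R[i]) (r1 : 'cV[R]_n) (lam1 : 'cV[R]_l) (beta1 : 'cV[R[i]]_n)
           (rho2 : R[i]) (r2 : 'cV[R]_m) (lam2 : 'cV[R]_q) (beta2 : 'cV[R[i]]_m),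
      optP A alpha1 alpha2 B b D d vs lam1 beta1 rho1 r1 /\
      optD A alpha1 alpha2 B b D d us lam2 beta2 rho2 r2.
Proof.
(* The lower bounds on alpha1 and alpha2 only ensure that S1 and S2 are
   nonempty, which the Slater points already do. *)
move=> _ _ [u0 slater1] [v0 slater2] us vs.
split=> [sad|[rho1 [r1 [lam1 [beta1 [rho2 [r2 [lam2 [beta2 [oP oD]]]]]]]]]].
- exact (saddle_optP_optD slater1 slater2 sad).
- exact (optP_optD_saddle slater1 slater2 oP oD).
Qed.
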